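(* Let $R$ be a preference profile and suppose that $x$ is a connector in $R$. Let $y\in A_x$. Then $A_y\subseteq A_x$ unless $x\succ_R A\setminus\{x,y\}$ (i.e., unless $x\succ_R z$ for all $z\in A\setminus\{x,y\}$).
   Context: Let $A$ be a finite set of alternatives; a preference profile $R$ assigns a strict total order $\succ_i$ on $A$ to each voter $i$ of a finite non-empty electorate. The majority margin is $g_R(x,y)=|\{i: x\succ_i y\}|-|\{i: y\succ_i x\}|$; $x\succsim_R y$ iff $g_R(x,y)\ge0$, with strict part $\succ_R$. For any set of alternatives $B$ and profile $R$ on $B$, a non-empty $X\subseteq B$ is dominant if $x\succ_R y$ for all $x\in X,y\in B\setminus X$; the top cycle $\mathrm{TC}(R)$ is the inclusion-smallest dominant set. For $x\in A$, $R|_{A\setminus\{x\}}$ denotes the profile on $A\setminus\{x\}$ obtained by restricting each voter's order. The connected set of $x$ is $A_x=\mathrm{TC}(R)\setminus(\mathrm{TC}(R|_{A\setminus\{x\}})\cup\{x\})$, and $x$ is a connector in $R$ if $A_x\neq\emptyset$. *)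

From mathcomp Require Import all_boot all_order all_algebra.
Set Implicit Arguments. Unset Strict Implicit. Unset Printing Implicit Defensive.
Import Order.TTheory GRing.Theory Num.Theory.
Local Open Scope ring_scope.

Section Voting.
Variables (A V : finType).

Definition strict_total (r : rel A) : Prop :=
  irreflexive r /\ transitive r /\ (forall x y, x != y -> r x y || r y x).

(* A preference profile: each voter i has a strict total order (r i x y = "x >_i y"). *)
Definition profile (pr : V -> rel A) : Prop := forall i, strict_total (pr i).

Definition margin (pr : V -> rel A) (x y : A) : int :=
  (#|[set i | pr i x y]|%:Z - #|[set i | pr i y x]|%:Z).

Definition wmaj (pr : V -> rel A) (x y : A) : bool := 0 <= margin pr x y.
Definition smaj (pr : V -> rel A) (x y : A) : bool := wmaj pr x y && ~~ wmaj pr y x.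

(* Dominant subsets of the alternative set B (profile restricted to B;
   restriction does not change pairwise margins between elements of B). *)
Definition dominant (pr : V -> rel A) (B X : {set A}) : bool :=
  [&& X != set0, X \subset B &
      [forall x in X, forall y in B :\: X, smaj pr x y]].

(* Top cycle of the profile restricted to B: the inclusion-smallest dominant set,
   realized as the intersection of all dominant subsets of B. *)
Definition TC (pr : V -> rel A) (B : {set A}) : {set A} :=
  \bigcap_(X : {set A} | dominant pr B X) X.

Definition connected_set (pr : V -> rel A) (x : A) : {set A} :=
  TC pr [set: A] :\: (TC pr ([set: A] :\ x) :|: [set x]).

Definition connector (pr : V -> rel A) (x : A) : Prop :=
  connected_set pr x != set0.

End Voting.

From mathcomp Require Import all_boot all_order all_algebra.

(* Since [smaj] is asymmetric, the dominant subsets of any [B] form a chain,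
   so [TC B] is the smallest of them.  Write [B] for the set of all
   alternatives and [D] for [B] without [x] and [y].  Both [TC (B :\ x)] and
   [TC (B :\ y) :\ x] are dominant in [D], hence comparable, and whichever is
   smaller is dominant in a larger set because the other one beats the missing
   alternative.  If [x] were not in [TC (B :\ y)], this would give a dominant
   subset of [B] avoiding [y], contradicting [y \in TC B].  So [x] is in
   [TC (B :\ y)], and unless that set is [{x}] we get
   [TC (B :\ x) \subset TC (B :\ y)], which means [A_y \subset A_x]. *)

Set Implicit Arguments. Unset Strict Implicit. Unset Printing Implicit Defensive.

Section TopCycle.
Variables (A V : finType) (pr : V -> rel A).

Lemma smaj_asym (a b : A) : smaj pr a b -> ~~ smaj pr b a.
Proof. by case/andP=> _ nba; apply/negP=> /andP[/negPn]; rewrite (negbTE nba). Qed.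

Lemma dominantP (B X : {set A}) :
  reflect [/\ X != set0, X \subset B &
             forall a b, a \in X -> b \in B -> b \notin X -> smaj pr a b]
          (dominant pr B X).
Proof.
apply: (iffP and3P) => [[X0 XB /forallP domX]|[X0 XB domX]]; split=> //.
  move=> a b aX bB bX.
  by have /implyP/(_ aX)/forallP/(_ b)/implyP := domX a; apply; rewrite inE bX.
apply/forallP=> a; apply/implyP=> aX; apply/forallP=> b; apply/implyP.
by rewrite inE => /andP[bX bB]; apply: domX.
Qed.

Lemma dominant_total (B X Y : {set A}) :
  dominant pr B X -> dominant pr B Y -> X \subset Y \/ Y \subset X.
Proof.
move=> /dominantP[_ XB domX] /dominantP[_ YB domY].
have [|/subsetPn[a aX aY]] := boolP (X \subset Y); first by left.
right; apply/subsetP=> b bY; apply: contraTT (domY b a bY (subsetP XB a aX) aY).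
by move=> bX; apply: smaj_asym; apply: domX; rewrite ?(subsetP YB).
Qed.

Lemma TC_sub (B X : {set A}) : dominant pr B X -> TC pr B \subset X.
Proof. exact: bigcap_inf. Qed.

Lemma TC_dominant (B : {set A}) : B != set0 -> dominant pr B (TC pr B).
Proof.
move=> B0; have domB : dominant pr B B by apply/dominantP; split=> // ? ? _ ->.
have [X domX minX] := arg_minnP (fun X : {set A} => #|X|) domB.
suff -> : TC pr B = X by [].
apply/eqP; rewrite eqEsubset TC_sub //=; apply/bigcapsP=> Y domY.
have [//|YX] := dominant_total domX domY.
by have /eqP <- : Y == X by rewrite eqEcard YX minX.
Qed.

Lemma dominant_restrict (B X : {set A}) (a : A) :
  dominant pr B X -> a \notin X -> dominant pr (B :\ a) X.
Proof.
move=> /dominantP[X0 XB domX] aX; apply/dominantP; split=> //.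
  apply/subsetP=> u uX; rewrite in_setD1 (subsetP XB) // andbT.
  by apply: contraNneq aX => <-.
by move=> u c uX /setD1P[_ cB]; apply: domX.
Qed.

Lemma TC_setD1_dominant (B : {set A}) (a b : A) :
  b \in B -> b != a -> dominant pr (B :\ a) (TC pr (B :\ a)).
Proof. by move=> bB ba; apply/TC_dominant/set0Pn; exists b; rewrite in_setD1 ba. Qed.

Lemma dominant_setD1 (B X : {set A}) (a : A) :
  dominant pr B X -> a \in X -> X :\ a != set0 -> dominant pr (B :\ a) (X :\ a).
Proof.
move=> /dominantP[_ XB domX] aX Xa0; apply/dominantP; split=> //.
  by rewrite setSD.
move=> u b; rewrite !inE => /andP[_ uX] /andP[ba bB]; rewrite ba /=.
exact: domX.
Qed.

Lemma dominant_setD1K (B X : {set A}) (a : A) :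
  dominant pr (B :\ a) X -> a \in B -> {in X, forall u, smaj pr u a} ->
  dominant pr B X.
Proof.
move=> /dominantP[X0 XBa domX] aB beats_a; apply/dominantP; split=> //.
  by apply: subset_trans XBa _; apply: subsetDl.
move=> u b uX bB bX; have [->|ba] := eqVneq b a; first exact: beats_a.
by apply: domX; rewrite ?inE ?ba.
Qed.

Lemma dominant_beats (B X : {set A}) (a u : A) :
  dominant pr B X -> a \in B -> a \notin X -> u \in X -> smaj pr u a.
Proof. by move=> /dominantP[_ _ domX] aB aX uX; apply: domX. Qed.

Section RemoveTwo.
Variables (B : {set A}) (a b : A).
Hypotheses (aB : a \in B) (bB : b \in B) (ab : a != b).

Let Ta := TC pr (B :\ a).
Let Tb := TC pr (B :\ b).

Let Ta_dom : dominant pr (B :\ a) Ta.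
Proof. by apply: TC_setD1_dominant bB _; rewrite eq_sym. Qed.

Let Tb_dom : dominant pr (B :\ b) Tb.
Proof. exact: TC_setD1_dominant aB ab. Qed.

Let setD1C : B :\ a :\ b = B :\ b :\ a.
Proof. by rewrite !setDDl setUC. Qed.

Lemma TC_setD1_mem : b \in TC pr B -> b \notin Ta -> a \in Tb.
Proof.
move=> bT bTa; apply: contraT => aTb.
have bTb : b \notin Tb.
  by have /dominantP[_ /subsetP TbB _] := Tb_dom; apply/negP=> /TbB; rewrite !inE eqxx.
have Tb_ab : dominant pr (B :\ a :\ b) Tb by rewrite setD1C; apply: dominant_restrict.
have [TaTb|TbTa] := dominant_total (dominant_restrict Ta_dom bTa) Tb_ab.
- have domTa : dominant pr B Ta.
    apply: dominant_setD1K Ta_dom aB _ => u /(subsetP TaTb).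
    by apply: dominant_beats Tb_dom _ aTb; rewrite !inE ab.
  by move: bTa; rewrite (subsetP (TC_sub domTa) _ bT).
- have domTb : dominant pr B Tb.
    apply: dominant_setD1K Tb_dom bB _ => u /(subsetP TbTa).
    by apply: dominant_beats Ta_dom _ bTa; rewrite !inE eq_sym ab.
  by move: bTb; rewrite (subsetP (TC_sub domTb) _ bT).
Qed.

Lemma TC_setD1_sub : b \notin Ta -> a \in Tb -> Tb != [set a] -> Ta \subset Tb.
Proof.
move=> bTa aTb Tba.
have Tba0 : Tb :\ a != set0.
  by apply: contraNneq Tba => Tba0; rewrite -(setD1K aTb) Tba0 setU0.
have domTba : dominant pr (B :\ a :\ b) (Tb :\ a).
  by rewrite setD1C; apply: dominant_setD1.
have [TaTb|TbTa] := dominant_total (dominant_restrict Ta_dom bTa) domTba.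
  exact: subset_trans TaTb (subsetDl _ _).
have domTba' : dominant pr (B :\ a) (Tb :\ a).
  apply: dominant_setD1K domTba _ _; first by rewrite in_setD1 eq_sym ab.
  by move=> u /(subsetP TbTa); apply: dominant_beats Ta_dom _ bTa; rewrite in_setD1 eq_sym ab.
exact: subset_trans (TC_sub domTba') (subsetDl _ _).
Qed.

End RemoveTwo.
End TopCycle.

Theorem lemma3 (A V : finType) (pr : V -> rel A) :
  0 < #|V| -> profile pr ->
  forall x y : A,
    connector pr x -> y \in connected_set pr x ->
    connected_set pr y \subset connected_set pr x
    \/ (forall z : A, z \in [set: A] :\: [set x; y] -> smaj pr x z).
Proof.
(* Only the asymmetry of [smaj] matters. *)
move=> _ _ x y _; rewrite !inE negb_or eq_sym => /andP[/andP[yTx xy] yT].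
have xTy := TC_setD1_mem (in_setT x) (in_setT y) xy yT yTx.
have [Ty_x|Ty_nx] := eqVneq (TC pr ([set: A] :\ y)) [set x].
  right=> z; rewrite !inE negb_or => /andP[/andP[zx zy] _].
  have := TC_setD1_dominant pr (in_setT x) xy; rewrite Ty_x => Ty_dom.
  apply: dominant_beats Ty_dom _ _ (set11 x).
    by rewrite in_setD1 zy in_setT.
  by rewrite in_set1 zx.
have TxTy := TC_setD1_sub (in_setT x) (in_setT y) xy yTx xTy Ty_nx.
left; apply/subsetP=> z; rewrite !inE !negb_or => /andP[/andP[zTy zy] zT].
rewrite zT andbT; apply/andP; split.
  by apply: contraNN zTy => /(subsetP TxTy).
by apply: contraNneq zTy => ->.
Qed.
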